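(* Let $f_1,f_2:(0,1)\to(0,1)$ each be of the form $f_m(p)=1-\sum_{k=1}^\infty c_{m,k}(1-p)^k$ with $c_{m,k}\ge0$ and $\sum_k c_{m,k}=1$ ($m=1,2$). Define $f(p)=f_2(f_1(p))$, $g(p)=1-(1-f_1(p))(1-f_2(p))$, and $h(p)=\alpha f_1(p)+(1-\alpha)f_2(p)$ for a fixed $\alpha\in(0,1)$. Then: (a) each of $f,g,h$ can also be written as $1-\sum_{k=1}^\infty c_k(1-p)^k$ with $c_k\ge0$ and $\sum_k c_k=1$; (b) if $\lim_{p\to0}f_m(p)/p=\infty$ for $m=1,2$, then $\lim_{p\to0}F(p)/p=\infty$ for each $F\in\{f,g,h\}$; (c) if $f_m'(p)=\Omega(f_m(p)/p)$ as $p\to0$ for $m=1,2$, then $F'(p)=\Omega(F(p)/p)$ as $p\to0$ for each $F\in\{f,g,h\}$.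
   Context: For positive $f_1,f_2$, $f_1(x)=\Omega(f_2(x))$ as $x\to x_0$ means there are $C,\delta>0$ with $f_1(x)\ge Cf_2(x)$ for all $x$ in the domain with $|x-x_0|<\delta$. *)

From Stdlib Require Import Reals.
Open Scope R_scope.

(* F(p) = 1 - sum_{k>=1} c_k (1-p)^k on (0,1), with c_k >= 0, sum_k c_k = 1.
   The sequence c is shifted: c j stands for c_{j+1}. *)
Definition series_form (F : R -> R) : Prop :=
  exists c : nat -> R,
    (forall k, 0 <= c k) /\ infinite_sum c 1 /\
    forall p, 0 < p < 1 -> infinite_sum (fun k => c k * (1 - p) ^ (S k)) (1 - F p).

Definition lim0_div_infty (F : R -> R) : Prop :=
  forall M : R, exists d, 0 < d /\ forall p, 0 < p < d -> p < 1 -> M < F p / p.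

Definition deriv_Omega (F : R -> R) : Prop :=
  exists C d, 0 < C /\ 0 < d /\
    forall p, 0 < p < d -> p < 1 ->
      exists l, derivable_pt_lim F p l /\ C * (F p / p) <= l.

(* Write q = 1 - p. A function of the given form satisfies 1 - F(p) = G(q), where
   G(q) = sum_k c_k q^k is the generating function of a probability distribution on
   the positive integers. Then 1 - h is the generating function of a mixture,
   1 - g = G_1 G_2 that of a sum of two independent variables, and 1 - f = G_2 o G_1
   that of a compound distribution; its coefficients come from expanding the powers
   G_1^j and regrouping a double series of nonnegative terms (each column is a
   finite sum, since G_1^j has no term below degree j).
   For (b) and (c) the form is only used through F(p) >= p (as (1-p)^k <= 1-p) and
   F(p) -> 0 as p -> 0. For the composition, f' = f_2'(f_1) f_1' is compared with
   f/p = (f_2(f_1)/f_1) (f_1/p). *)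

From Stdlib Require Import Reals Lra Lia.
From Coquelicot Require Import Coquelicot.
Open Scope R_scope.

Lemma infinite_sum_is_lim_seq a l :
  infinite_sum a l <-> is_lim_seq (sum_f_R0 a) l.
Proof. rewrite is_lim_seq_Reals. reflexivity. Qed.

Lemma infinite_sum_ext a b l :
  (forall k, a k = b k) -> infinite_sum a l -> infinite_sum b l.
Proof.
  intros Hab Ha. apply is_series_Reals. apply is_series_Reals in Ha.
  exact (is_series_ext _ _ _ Hab Ha).
Qed.

Lemma infinite_sum_plus a b la lb :
  infinite_sum a la -> infinite_sum b lb ->
  infinite_sum (fun k => a k + b k) (la + lb).
Proof.
  intros Ha Hb. apply is_series_Reals.
  apply is_series_Reals in Ha. apply is_series_Reals in Hb.
  exact (is_series_plus _ _ _ _ Ha Hb).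
Qed.

Lemma infinite_sum_scal x a l :
  infinite_sum a l -> infinite_sum (fun k => x * a k) (x * l).
Proof.
  intros Ha. apply is_series_Reals. apply is_series_Reals in Ha.
  exact (is_series_scal _ _ _ Ha).
Qed.

Lemma infinite_sum_shift a s :
  a 0%nat = 0 -> infinite_sum (fun k => a (S k)) s <-> infinite_sum a s.
Proof.
  intros Ha0. rewrite !infinite_sum_is_lim_seq, (is_lim_seq_incr_1 (sum_f_R0 a)).
  assert (Hsum : forall n, sum_f_R0 (fun k => a (S k)) n = sum_f_R0 a (S n)).
  { intros n. rewrite (decomp_sum a (S n)), Ha0 by lia. simpl. ring. }
  split; apply is_lim_seq_ext; intros n; rewrite Hsum; reflexivity.
Qed.

Lemma partial_sum_le_infinite_sum a l N :
  (forall k, 0 <= a k) -> infinite_sum a l -> sum_f_R0 a N <= l.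
Proof.
  intros Ha Hl. apply infinite_sum_is_lim_seq in Hl.
  apply (is_lim_seq_incr_compare _ _ Hl). intros n. rewrite tech5.
  specialize (Ha (S n)). lra.
Qed.

Lemma infinite_sum_le a b la lb :
  (forall k, a k <= b k) -> infinite_sum a la -> infinite_sum b lb -> la <= lb.
Proof.
  intros Hab Ha Hb.
  apply infinite_sum_is_lim_seq in Ha. apply infinite_sum_is_lim_seq in Hb.
  exact (is_lim_seq_le _ _ _ _ (fun n => sum_Rle _ _ n (fun k _ => Hab k)) Ha Hb).
Qed.

Lemma is_lim_seq_sum_f_R0 (u : nat -> nat -> R) (l : nat -> R) J :
  (forall j, is_lim_seq (u j) (l j)) ->
  is_lim_seq (fun N => sum_f_R0 (fun j => u j N) J) (sum_f_R0 l J).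
Proof.
  intros Hu. induction J as [|J IH]; simpl.
  - apply Hu.
  - exact (is_lim_seq_plus' _ _ _ _ IH (Hu (S J))).
Qed.

Lemma sum_f_R0_swap (u : nat -> nat -> R) N M :
  sum_f_R0 (fun n => sum_f_R0 (fun j => u j n) M) N =
  sum_f_R0 (fun j => sum_f_R0 (u j) N) M.
Proof.
  induction N as [|N IH]; simpl; [reflexivity|].
  rewrite IH, <- sum_plus. apply sum_eq. intros j _. reflexivity.
Qed.

Lemma sum_f_R0_zero_tail a n N :
  (forall j, (n < j)%nat -> a j = 0) -> (n <= N)%nat -> sum_f_R0 a N = sum_f_R0 a n.
Proof.
  intros Ha HnN. induction HnN as [|N HnN IH]; [reflexivity|].
  rewrite tech5, IH, (Ha (S N)) by lia. ring.
Qed.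

Lemma sum_f_R0_le_mono a J N :
  (forall k, 0 <= a k) -> (J <= N)%nat -> sum_f_R0 a J <= sum_f_R0 a N.
Proof.
  intros Ha HJN. induction HJN as [|N HJN IH]; [lra|].
  rewrite tech5. specialize (Ha (S N)). lra.
Qed.

Lemma infinite_sum_triangular_swap (u : nat -> nat -> R) (r : nat -> R) s :
  (forall j n, 0 <= u j n) -> (forall j n, (n < j)%nat -> u j n = 0) ->
  (forall j, infinite_sum (u j) (r j)) -> infinite_sum r s ->
  infinite_sum (fun n => sum_f_R0 (fun j => u j n) n) s.
Proof.
  intros Hu Hlow Hrow Hs.
  set (T := sum_f_R0 (fun n => sum_f_R0 (fun j => u j n) n)).
  assert (HT : forall N, T N = sum_f_R0 (fun j => sum_f_R0 (u j) N) N).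
  { intros N. unfold T. rewrite <- sum_f_R0_swap. apply sum_eq. intros n HnN.
    symmetry. apply sum_f_R0_zero_tail; auto. }
  assert (Hr : forall j, 0 <= r j).
  { intros j. apply Rle_trans with (sum_f_R0 (u j) 0); [apply Hu|].
    apply partial_sum_le_infinite_sum; auto. }
  assert (HTs : forall N, T N <= s).
  { intros N. rewrite HT. apply Rle_trans with (sum_f_R0 r N).
    - apply sum_Rle. intros j _. apply partial_sum_le_infinite_sum; auto.
    - apply partial_sum_le_infinite_sum; auto. }
  assert (Hgrow : Un_growing T).
  { intros N. unfold T. rewrite tech5.
    assert (0 <= sum_f_R0 (fun j => u j (S N)) (S N)) by (apply cond_pos_sum; auto).
    lra. }
  destruct (growing_cv T Hgrow) as [L HL].
  { exists s. intros x [N ->]. apply HTs. }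
  apply is_lim_seq_Reals in HL.
  assert (HLs : L <= s) by exact (is_lim_seq_le _ _ _ _ HTs HL (is_lim_seq_const s)).
  assert (HrL : forall J, sum_f_R0 r J <= L).
  { intros J.
    assert (Hev : eventually (fun N => sum_f_R0 (fun j => sum_f_R0 (u j) N) J <= T N)).
    { exists J. intros N HJN. rewrite HT. apply sum_f_R0_le_mono; auto.
      intros j. apply cond_pos_sum; auto. }
    refine (is_lim_seq_le_loc _ _ (sum_f_R0 r J) _ Hev _ HL).
    apply is_lim_seq_sum_f_R0. intros j. apply infinite_sum_is_lim_seq, Hrow. }
  assert (HsL : s <= L).
  { apply infinite_sum_is_lim_seq in Hs.
    exact (is_lim_seq_le _ _ _ _ HrL Hs (is_lim_seq_const L)). }
  apply infinite_sum_is_lim_seq. replace s with L by lra. exact HL.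
Qed.

Lemma infinite_sum_PS_mult (A B : nat -> R) q sA sB :
  (forall n, 0 <= A n) -> (forall n, 0 <= B n) -> 0 <= q ->
  infinite_sum (fun n => A n * q ^ n) sA -> infinite_sum (fun n => B n * q ^ n) sB ->
  infinite_sum (fun n => PS_mult A B n * q ^ n) (sA * sB).
Proof.
  intros HA HB Hq HsA HsB. apply is_series_Reals.
  apply is_series_Reals in HsA. apply is_series_Reals in HsB.
  eapply is_series_ext; [|apply (is_series_mult_pos _ _ _ _ HsA HsB)].
  - intros n. unfold PS_mult. rewrite Rmult_comm, scal_sum. apply sum_eq. intros k Hk.
    replace (q ^ n) with (q ^ k * q ^ (n - k)) by (rewrite <- pow_add; f_equal; lia).
    ring.
  - intros n. apply Rmult_le_pos; [apply HA | apply pow_le; exact Hq].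
  - intros n. apply Rmult_le_pos; [apply HB | apply pow_le; exact Hq].
Qed.

Fixpoint PS_pow (A : nat -> R) (j : nat) : nat -> R :=
  match j with
  | O => fun n => match n with O => 1 | S _ => 0 end
  | S j => PS_mult A (PS_pow A j)
  end.

Lemma PS_pow_nonneg A j n : (forall k, 0 <= A k) -> 0 <= PS_pow A j n.
Proof.
  intros HA. revert n. induction j as [|j IH]; intros n; simpl.
  - destruct n; lra.
  - apply cond_pos_sum. intros k. apply Rmult_le_pos; auto.
Qed.

Lemma PS_pow_lt_eq0 A j n : A 0%nat = 0 -> (n < j)%nat -> PS_pow A j n = 0.
Proof.
  intros HA0. revert n. induction j as [|j IH]; intros n Hn; [lia|].
  simpl. unfold PS_mult. apply sum_eq_R0. intros [|k] Hk.
  - rewrite HA0. ring.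
  - rewrite IH by lia. ring.
Qed.

Lemma infinite_sum_PS_pow A q x j :
  (forall n, 0 <= A n) -> 0 <= q -> infinite_sum (fun n => A n * q ^ n) x ->
  infinite_sum (fun n => PS_pow A j n * q ^ n) (x ^ j).
Proof.
  intros HA Hq Hx. induction j as [|j IH]; simpl.
  - apply infinite_sum_is_lim_seq.
    apply (is_lim_seq_ext (fun _ => 1)); [|apply is_lim_seq_const].
    intros n. induction n as [|n IHn]; simpl; [ring|]. rewrite <- IHn. ring.
  - apply infinite_sum_PS_mult; auto. intros n. apply PS_pow_nonneg, HA.
Qed.

Definition PS_comp (A B : nat -> R) (n : nat) : R :=
  sum_f_R0 (fun j => B j * PS_pow A j n) n.

Lemma infinite_sum_PS_comp (A B : nat -> R) q x s :
  (forall n, 0 <= A n) -> (forall n, 0 <= B n) -> A 0%nat = 0 -> 0 <= q ->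
  infinite_sum (fun n => A n * q ^ n) x -> infinite_sum (fun j => B j * x ^ j) s ->
  infinite_sum (fun n => PS_comp A B n * q ^ n) s.
Proof.
  intros HA HB HA0 Hq Hx Hs.
  eapply infinite_sum_ext;
    [|apply (infinite_sum_triangular_swap (fun j n => B j * PS_pow A j n * q ^ n)
              (fun j => B j * x ^ j))].
  - intros n. unfold PS_comp. rewrite Rmult_comm, scal_sum. apply sum_eq. intros j _. ring.
  - intros j n. apply Rmult_le_pos; [apply Rmult_le_pos|apply pow_le]; auto.
    apply PS_pow_nonneg, HA.
  - intros j n Hn. rewrite PS_pow_lt_eq0 by assumption. ring.
  - intros j. eapply infinite_sum_ext;
      [|apply (infinite_sum_scal (B j) _ _ (infinite_sum_PS_pow A q x j HA Hq Hx))].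
    intros n. simpl. ring.
  - exact Hs.
Qed.

(* [series_form] with the coefficients re-indexed from 1, as in the paper:
   [A n] is the paper's [c_n], and [A 0 = 0]. *)
Definition pgf_repr (A : nat -> R) (F : R -> R) : Prop :=
  (forall n, 0 <= A n) /\ A 0%nat = 0 /\ infinite_sum (fun n => A n * 1 ^ n) 1 /\
  forall p, 0 < p < 1 -> infinite_sum (fun n => A n * (1 - p) ^ n) (1 - F p).

Lemma series_form_pgf_repr F : series_form F <-> exists A, pgf_repr A F.
Proof.
  assert (Hshift : forall A q s, A 0%nat = 0 ->
    infinite_sum (fun k => A (S k) * q ^ S k) s <-> infinite_sum (fun n => A n * q ^ n) s).
  { intros A q s HA0. apply (infinite_sum_shift (fun n => A n * q ^ n)). rewrite HA0. ring. }
  split.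
  - intros (c & Hc & Hsum & HF).
    set (A n := match n with O => 0 | S k => c k end).
    exists A. repeat split.
    + intros [|n]; simpl; [lra | apply Hc].
    + apply Hshift; [reflexivity|]. eapply infinite_sum_ext; [|exact Hsum].
      intros k. unfold A. rewrite pow1. ring.
    + intros p Hp. apply Hshift; [reflexivity | exact (HF p Hp)].
  - intros (A & HA & HA0 & Hsum & HF).
    exists (fun k => A (S k)). repeat split.
    + intros k. apply HA.
    + eapply infinite_sum_ext; [|apply (Hshift A 1 1 HA0), Hsum].
      intros k. simpl. rewrite pow1. ring.
    + intros p Hp. apply (Hshift A (1 - p) _ HA0), HF, Hp.
Qed.

Lemma series_form_convex F1 F2 a : 0 <= a <= 1 ->
  series_form F1 -> series_form F2 -> series_form (fun p => a * F1 p + (1 - a) * F2 p).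
Proof.
  intros Ha (c1 & Hc1 & Hsum1 & HF1) (c2 & Hc2 & Hsum2 & HF2).
  assert (Hmix : forall u v lu lv, infinite_sum u lu -> infinite_sum v lv ->
    infinite_sum (fun k => a * u k + (1 - a) * v k) (a * lu + (1 - a) * lv)).
  { intros u v lu lv Hu Hv.
    exact (infinite_sum_plus _ _ _ _ (infinite_sum_scal a _ _ Hu)
             (infinite_sum_scal (1 - a) _ _ Hv)). }
  exists (fun k => a * c1 k + (1 - a) * c2 k). repeat split.
  - intros k. specialize (Hc1 k). specialize (Hc2 k). nra.
  - pose proof (Hmix _ _ _ _ Hsum1 Hsum2) as Hsum.
    replace (a * 1 + (1 - a) * 1) with 1 in Hsum by ring. exact Hsum.
  - intros p Hp.
    replace (1 - (a * F1 p + (1 - a) * F2 p))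
      with (a * (1 - F1 p) + (1 - a) * (1 - F2 p)) by ring.
    eapply infinite_sum_ext; [|exact (Hmix _ _ _ _ (HF1 p Hp) (HF2 p Hp))].
    intros k. cbv beta. ring.
Qed.

Lemma series_form_compl_mult F1 F2 :
  series_form F1 -> series_form F2 -> series_form (fun p => 1 - (1 - F1 p) * (1 - F2 p)).
Proof.
  rewrite !series_form_pgf_repr.
  intros (A & HA & HA0 & Hsum1 & HF1) (B & HB & HB0 & Hsum2 & HF2).
  exists (PS_mult A B). repeat split.
  - intros n. apply cond_pos_sum. intros k. apply Rmult_le_pos; auto.
  - unfold PS_mult. simpl. rewrite HA0. ring.
  - pose proof (infinite_sum_PS_mult A B 1 1 1 HA HB ltac:(lra) Hsum1 Hsum2) as Hsum.
    rewrite Rmult_1_l in Hsum. exact Hsum.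
  - intros p Hp. replace (1 - (1 - (1 - F1 p) * (1 - F2 p))) with ((1 - F1 p) * (1 - F2 p))
      by ring.
    apply infinite_sum_PS_mult; auto; lra.
Qed.

Lemma series_form_comp F1 F2 : (forall p, 0 < p < 1 -> 0 < F1 p < 1) ->
  series_form F1 -> series_form F2 -> series_form (fun p => F2 (F1 p)).
Proof.
  intros HF1r. rewrite !series_form_pgf_repr.
  intros (A & HA & HA0 & Hsum1 & HF1) (B & HB & HB0 & Hsum2 & HF2).
  exists (PS_comp A B). repeat split.
  - intros n. apply cond_pos_sum. intros j. apply Rmult_le_pos; [apply HB|].
    apply PS_pow_nonneg, HA.
  - unfold PS_comp. simpl. rewrite HB0. ring.
  - apply (infinite_sum_PS_comp A B 1 1); auto; lra.
  - intros p Hp. apply (infinite_sum_PS_comp A B (1 - p) (1 - F1 p)); auto; lra.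
Qed.

Lemma series_form_ge_id F x : series_form F -> 0 < x < 1 -> x <= F x.
Proof.
  intros (c & Hc & Hsum & HF) Hx.
  assert (Hterm : forall k, c k * (1 - x) ^ S k <= (1 - x) * c k).
  { intros k. rewrite <- tech_pow_Rmult.
    pose proof (pow_incr (1 - x) 1 k ltac:(lra)) as Hk. rewrite pow1 in Hk.
    assert (0 <= c k * (1 - x)) by (apply Rmult_le_pos; [apply Hc | lra]).
    replace (c k * ((1 - x) * (1 - x) ^ k)) with (c k * (1 - x) * (1 - x) ^ k) by ring.
    replace ((1 - x) * c k) with (c k * (1 - x) * 1) by ring.
    apply Rmult_le_compat_l; assumption. }
  pose proof (infinite_sum_le _ _ _ _ Hterm (HF x Hx) (infinite_sum_scal (1 - x) _ _ Hsum)).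
  lra.
Qed.

Lemma pow_1_minus_ge p n : 0 <= p <= 1 -> 1 - INR n * p <= (1 - p) ^ n.
Proof.
  intros Hp. induction n as [|n IH]; [simpl; lra|].
  rewrite S_INR, <- tech_pow_Rmult. assert (0 <= INR n) by apply pos_INR. nra.
Qed.

Definition near0 (P : R -> Prop) : Prop :=
  exists d, 0 < d /\ forall p, 0 < p < d -> p < 1 -> P p.

Lemma near0_mono (P Q : R -> Prop) :
  (forall p, 0 < p < 1 -> P p -> Q p) -> near0 P -> near0 Q.
Proof.
  intros HPQ (d & Hd & HP). exists d. split; [exact Hd|].
  intros p Hp Hp1. apply HPQ; [lra | exact (HP p Hp Hp1)].
Qed.

Lemma near0_and (P Q : R -> Prop) : near0 P -> near0 Q -> near0 (fun p => P p /\ Q p).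
Proof.
  intros (d1 & Hd1 & HP) (d2 & Hd2 & HQ). exists (Rmin d1 d2).
  split; [now apply Rmin_pos|]. intros p Hp Hp1.
  pose proof (Rmin_l d1 d2). pose proof (Rmin_r d1 d2).
  split; [apply HP | apply HQ]; lra.
Qed.

Definition vanishes_at_0 (F : R -> R) : Prop :=
  forall e, 0 < e -> near0 (fun p => F p < e).

(* With N such that c_0 + ... + c_N > 1 - e/2, Bernoulli's inequality gives
   1 - F(p) >= (1 - (N+1) p) (c_0 + ... + c_N) > 1 - e/2 - (N+1) p. *)
Lemma series_form_vanishes_at_0 F : series_form F -> vanishes_at_0 F.
Proof.
  intros (c & Hc & Hsum & HF) e He.
  destruct (Hsum (e / 2) ltac:(lra)) as [N HN]. specialize (HN N (le_n N)).
  unfold Rdist in HN. apply Rabs_def2 in HN.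
  assert (HSle : sum_f_R0 c N <= 1) by (apply partial_sum_le_infinite_sum; auto).
  assert (HSge : 0 <= sum_f_R0 c N) by (apply cond_pos_sum; auto).
  assert (HN1 : 0 < INR (S N)) by (apply lt_0_INR; lia).
  exists (e / (2 * INR (S N))). split; [apply Rdiv_lt_0_compat; lra|].
  intros p Hp Hp1.
  assert (Hsmall : INR (S N) * p < e / 2).
  { apply Rlt_le_trans with (INR (S N) * (e / (2 * INR (S N)))).
    - apply Rmult_lt_compat_l; lra.
    - apply Req_le. field. lra. }
  assert (Hpartial : sum_f_R0 (fun k => c k * (1 - p) ^ S k) N <= 1 - F p).
  { apply partial_sum_le_infinite_sum; [|apply HF; lra].
    intros k. apply Rmult_le_pos; [apply Hc | apply pow_le; lra]. }
  assert (Hbern : (1 - INR (S N) * p) * sum_f_R0 c N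
                  <= sum_f_R0 (fun k => c k * (1 - p) ^ S k) N).
  { rewrite scal_sum. apply sum_Rle. intros k Hk.
    apply Rmult_le_compat_l; [apply Hc|].
    apply Rle_trans with (1 - INR (S k) * p); [|apply pow_1_minus_ge; lra].
    assert (INR (S k) <= INR (S N)) by (apply le_INR; lia). nra. }
  nra.
Qed.

Lemma lim0_div_infty_le F G :
  (forall p, 0 < p < 1 -> F p <= G p) -> lim0_div_infty F -> lim0_div_infty G.
Proof.
  intros HFG HF M. refine (near0_mono _ _ _ (HF M)).
  intros p Hp HM. apply Rlt_le_trans with (1 := HM).
  apply Rmult_le_compat_r; [left; apply Rinv_0_lt_compat; lra | apply HFG, Hp].
Qed.

Lemma lim0_div_infty_convex F1 F2 a : 0 <= a <= 1 ->
  lim0_div_infty F1 -> lim0_div_infty F2 ->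
  lim0_div_infty (fun p => a * F1 p + (1 - a) * F2 p).
Proof.
  intros Ha HF1 HF2 M.
  refine (near0_mono _ _ _ (near0_and _ _ (HF1 M) (HF2 M))).
  intros p Hp [H1 H2].
  replace ((a * F1 p + (1 - a) * F2 p) / p) with (a * (F1 p / p) + (1 - a) * (F2 p / p))
    by (field; lra).
  pose proof (Rmin_glb_lt _ _ _ H1 H2) as Hm.
  pose proof (Rmin_l (F1 p / p) (F2 p / p)). pose proof (Rmin_r (F1 p / p) (F2 p / p)).
  nra.
Qed.

Lemma deriv_Omega_near0 F : deriv_Omega F <->
  exists C, 0 < C /\ near0 (fun p => exists l, derivable_pt_lim F p l /\ C * (F p / p) <= l).
Proof.
  split.
  - intros (C & d & HC & Hd & HF). exists C. split; [exact HC|]. exists d. split; assumption.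
  - intros (C & HC & d & Hd & HF). exists C, d. repeat split; assumption.
Qed.

Lemma Rmin_mult_le_l C C' u l : 0 <= u -> C * u <= l -> Rmin C C' * u <= l.
Proof.
  intros Hu Hl. apply Rle_trans with (2 := Hl). apply Rmult_le_compat_r; [exact Hu | apply Rmin_l].
Qed.

Lemma Rmin_mult_le_r C C' u l : 0 <= u -> C' * u <= l -> Rmin C C' * u <= l.
Proof. rewrite Rmin_comm. apply Rmin_mult_le_l. Qed.

Lemma deriv_Omega_comp F1 F2 :
  (forall p, 0 < p < 1 -> 0 < F1 p < 1) -> (forall y, 0 < y < 1 -> 0 <= F2 y) ->
  vanishes_at_0 F1 -> deriv_Omega F1 -> deriv_Omega F2 -> deriv_Omega (fun p => F2 (F1 p)).
Proof.
  intros HF1 HF2 Hvan.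
  intros (C1 & HC1 & HD1)%deriv_Omega_near0 (C2 & HC2 & d2 & Hd2 & HD2)%deriv_Omega_near0.
  apply deriv_Omega_near0. exists (C1 * C2). split; [nra|].
  refine (near0_mono _ _ _ (near0_and _ _ HD1 (Hvan d2 Hd2))).
  intros p Hp [(l1 & Hl1 & Hb1) Hsmall].
  destruct (HF1 p Hp) as [Hy0 Hy1].
  destruct (HD2 (F1 p) (conj Hy0 Hsmall) Hy1) as (l2 & Hl2 & Hb2).
  exists (l2 * l1). split; [exact (derivable_pt_lim_comp _ _ p _ _ Hl1 Hl2)|].
  replace (C1 * C2 * (F2 (F1 p) / p))
    with ((C2 * (F2 (F1 p) / F1 p)) * (C1 * (F1 p / p))) by (field; lra).
  assert (0 <= F2 (F1 p)) by (apply HF2; lra).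
  apply Rmult_le_compat; try assumption.
  - apply Rmult_le_pos; [lra | apply Rdiv_le_0_compat; lra].
  - apply Rmult_le_pos; [lra | apply Rdiv_le_0_compat; lra].
Qed.

Lemma derivable_pt_lim_compl_mult F1 F2 p l1 l2 :
  derivable_pt_lim F1 p l1 -> derivable_pt_lim F2 p l2 ->
  derivable_pt_lim (fun x => 1 - (1 - F1 x) * (1 - F2 x)) p
    (l1 * (1 - F2 p) + l2 * (1 - F1 p)).
Proof.
  intros H1 H2.
  pose proof (derivable_pt_lim_minus _ _ p _ _ (derivable_pt_lim_const 1 p) H1) as H1c.
  pose proof (derivable_pt_lim_minus _ _ p _ _ (derivable_pt_lim_const 1 p) H2) as H2c.
  pose proof (derivable_pt_lim_minus _ _ p _ _ (derivable_pt_lim_const 1 p)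
                (derivable_pt_lim_mult _ _ p _ _ H1c H2c)) as H.
  replace (l1 * (1 - F2 p) + l2 * (1 - F1 p))
    with (0 - ((0 - l1) * (1 - F2 p) + (1 - F1 p) * (0 - l2))) by ring.
  exact H.
Qed.

(* Once F1, F2 < 1/2, g' = l1 (1 - F2) + l2 (1 - F1) >= (l1 + l2) / 2, while
   g / p <= F1 / p + F2 / p. *)
Lemma deriv_Omega_compl_mult F1 F2 :
  (forall p, 0 < p < 1 -> 0 <= F1 p) -> (forall p, 0 < p < 1 -> 0 <= F2 p) ->
  vanishes_at_0 F1 -> vanishes_at_0 F2 -> deriv_Omega F1 -> deriv_Omega F2 ->
  deriv_Omega (fun p => 1 - (1 - F1 p) * (1 - F2 p)).
Proof.
  intros HF1 HF2 Hvan1 Hvan2.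
  intros (C1 & HC1 & HD1)%deriv_Omega_near0 (C2 & HC2 & HD2)%deriv_Omega_near0.
  apply deriv_Omega_near0. exists (Rmin C1 C2 / 2).
  split; [pose proof (Rmin_pos _ _ HC1 HC2); lra|].
  refine (near0_mono _ _ _ (near0_and _ _ (near0_and _ _ HD1 HD2)
                              (near0_and _ _ (Hvan1 (1/2) ltac:(lra)) (Hvan2 (1/2) ltac:(lra))))).
  intros p Hp [[(l1 & Hl1 & Hb1) (l2 & Hl2 & Hb2)] [Hs1 Hs2]].
  exists (l1 * (1 - F2 p) + l2 * (1 - F1 p)).
  split; [exact (derivable_pt_lim_compl_mult _ _ _ _ _ Hl1 Hl2)|].
  pose proof (HF1 p Hp). pose proof (HF2 p Hp).
  assert (Hu : 0 <= F1 p / p) by (apply Rdiv_le_0_compat; lra).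
  assert (Hv : 0 <= F2 p / p) by (apply Rdiv_le_0_compat; lra).
  pose proof (Rmin_mult_le_l C1 C2 _ _ Hu Hb1).
  pose proof (Rmin_mult_le_r C1 C2 _ _ Hv Hb2).
  pose proof (Rmin_pos _ _ HC1 HC2).
  set (m := Rmin C1 C2) in *. set (u := F1 p / p) in *. set (v := F2 p / p) in *.
  assert (Hg : (1 - (1 - F1 p) * (1 - F2 p)) / p <= u + v).
  { replace ((1 - (1 - F1 p) * (1 - F2 p)) / p) with (u + v - F1 p * v)
      by (unfold u, v; field; lra).
    nra. }
  assert (0 <= l1) by nra. assert (0 <= l2) by nra.
  assert (m / 2 * ((1 - (1 - F1 p) * (1 - F2 p)) / p) <= m / 2 * (u + v))
    by (apply Rmult_le_compat_l; lra).
  nra.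
Qed.

Lemma deriv_Omega_convex F1 F2 a : 0 <= a <= 1 ->
  (forall p, 0 < p < 1 -> 0 <= F1 p) -> (forall p, 0 < p < 1 -> 0 <= F2 p) ->
  deriv_Omega F1 -> deriv_Omega F2 -> deriv_Omega (fun p => a * F1 p + (1 - a) * F2 p).
Proof.
  intros Ha HF1 HF2.
  intros (C1 & HC1 & HD1)%deriv_Omega_near0 (C2 & HC2 & HD2)%deriv_Omega_near0.
  apply deriv_Omega_near0. exists (Rmin C1 C2). split; [now apply Rmin_pos|].
  refine (near0_mono _ _ _ (near0_and _ _ HD1 HD2)).
  intros p Hp [(l1 & Hl1 & Hb1) (l2 & Hl2 & Hb2)].
  exists (a * l1 + (1 - a) * l2). split.
  { exact (derivable_pt_lim_plus _ _ p _ _ (derivable_pt_lim_scal _ a p _ Hl1)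
             (derivable_pt_lim_scal _ (1 - a) p _ Hl2)). }
  pose proof (HF1 p Hp). pose proof (HF2 p Hp).
  assert (Hu : 0 <= F1 p / p) by (apply Rdiv_le_0_compat; lra).
  assert (Hv : 0 <= F2 p / p) by (apply Rdiv_le_0_compat; lra).
  pose proof (Rmin_mult_le_l C1 C2 _ _ Hu Hb1).
  pose proof (Rmin_mult_le_r C1 C2 _ _ Hv Hb2).
  replace ((a * F1 p + (1 - a) * F2 p) / p) with (a * (F1 p / p) + (1 - a) * (F2 p / p))
    by (field; lra).
  nra.
Qed.

Theorem proposition4 (f1 f2 : R -> R) (alpha : R) (Halpha : 0 < alpha < 1)
  (Hr1 : forall p, 0 < p < 1 -> 0 < f1 p < 1)
  (Hr2 : forall p, 0 < p < 1 -> 0 < f2 p < 1)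
  (Hs1 : series_form f1) (Hs2 : series_form f2) :
  let f := fun p => f2 (f1 p) in
  let g := fun p => 1 - (1 - f1 p) * (1 - f2 p) in
  let h := fun p => alpha * f1 p + (1 - alpha) * f2 p in
  (series_form f /\ series_form g /\ series_form h) /\
  (lim0_div_infty f1 -> lim0_div_infty f2 ->
     lim0_div_infty f /\ lim0_div_infty g /\ lim0_div_infty h) /\
  (deriv_Omega f1 -> deriv_Omega f2 ->
     deriv_Omega f /\ deriv_Omega g /\ deriv_Omega h).
Proof.
  intros f g h.
  assert (Hpos1 : forall p, 0 < p < 1 -> 0 <= f1 p) by (intros p Hp; pose proof (Hr1 p Hp); lra).
  assert (Hpos2 : forall p, 0 < p < 1 -> 0 <= f2 p) by (intros p Hp; pose proof (Hr2 p Hp); lra).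
  assert (Hvan1 := series_form_vanishes_at_0 f1 Hs1).
  assert (Hvan2 := series_form_vanishes_at_0 f2 Hs2).
  split; [|split].
  - split; [|split].
    + exact (series_form_comp f1 f2 Hr1 Hs1 Hs2).
    + exact (series_form_compl_mult f1 f2 Hs1 Hs2).
    + apply series_form_convex; [lra | exact Hs1 | exact Hs2].
  - intros L1 L2. split; [|split].
    + apply (lim0_div_infty_le f1); [|exact L1].
      intros p Hp. unfold f. apply series_form_ge_id; [exact Hs2 | apply Hr1, Hp].
    + apply (lim0_div_infty_le f1); [|exact L1].
      intros p Hp. pose proof (Hr1 p Hp). pose proof (Hr2 p Hp). unfold g. nra.
    + apply lim0_div_infty_convex; [lra | exact L1 | exact L2].
  - intros D1 D2. split; [|split].
    + exact (deriv_Omega_comp f1 f2 Hr1 Hpos2 Hvan1 D1 D2).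
    + exact (deriv_Omega_compl_mult f1 f2 Hpos1 Hpos2 Hvan1 Hvan2 D1 D2).
    + apply deriv_Omega_convex; [lra | exact Hpos1 | exact Hpos2 | exact D1 | exact D2].
Qed.
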